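(* Let $n\ge 0$, let $A\in\mathcal{PM}(n)$ and let $v\in\{0,1\}^n$ be a row vector. Then $v$ is a poset vector of $A$ if and only if $\mathrm{supp}(v)$ is an order ideal of $P_A$. Moreover, the map $v\mapsto \mathrm{supp}(v)$ is a bijection between the set of poset vectors of $A$ (equivalently, the set of $v$-extensions $A^v$ of $A$) and the set of order ideals of $P_A$.
   Context: Let $X_n=\{0,1,\ldots,n-1\}$. A naturally labeled (NL) poset on $X_n$ is a partial order $\preceq$ on $X_n$ such that $x\preceq y$ implies $x\le y$ in the usual integer order. Its poset matrix is the $n\times n$ $(0,1)$-matrix $A=(a_{i,j})_{i,j\in X_n}$ (indices starting from $0$) with $a_{i,j}=1$ if $j\preceq i$ and $a_{i,j}=0$ otherwise. $\mathcal{PM}(n)$ denotes the set of poset matrices of NL posets on $X_n$, and for $A\in\mathcal{PM}(n)$, $P_A$ is the unique NL poset on $X_n$ whose poset matrix is $A$. For a row vector $v\in\{0,1\}^n$, the $v$-extension of $A$ is the $(n+1)\times(n+1)$ matrix $A^v=\begin{bmatrix}A&\mathbf{0}\\ v&1\end{bmatrix}$, and $v$ is called a poset vector of $A$ if $A^v\in\mathcal{PM}(n+1)$. $\mathrm{supp}(v)=\{j\in X_n: v_j=1\}$. An order ideal of a poset is a downward closed subset (the empty set included). *)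

From mathcomp Require Import all_boot all_algebra.
Set Implicit Arguments. Unset Strict Implicit. Unset Printing Implicit Defensive.

(* (0,1)-matrices are represented as boolean matrices 'M[bool]_n;
   entry true = 1, false = 0. X_n = 'I_n. *)

Definition NL_poset (n : nat) (le : rel 'I_n) : Prop :=
  [/\ reflexive le, antisymmetric le, transitive le &
      forall x y : 'I_n, le x y -> (x <= y)%N].

Definition poset_matrix (n : nat) (le : rel 'I_n) : 'M[bool]_n :=
  \matrix_(i < n, j < n) le j i.

Definition PM (n : nat) (A : 'M[bool]_n) : Prop :=
  exists le : rel 'I_n, NL_poset le /\ A = poset_matrix le.

Definition P_of (n : nat) (A : 'M[bool]_n) : rel 'I_n := fun x y => A y x.

Definition vext (n : nat) (A : 'M[bool]_n) (v : 'rV[bool]_n) : 'M[bool]_n.+1 :=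
  castmx (addn1 n, addn1 n)
    (block_mx A (const_mx false : 'cV[bool]_n) v (const_mx true : 'M[bool]_1)).

Definition poset_vector (n : nat) (A : 'M[bool]_n) (v : 'rV[bool]_n) : Prop :=
  PM (vext A v).

Definition supp (n : nat) (v : 'rV[bool]_n) : {set 'I_n} := [set j | v ord0 j].

Definition order_ideal (n : nat) (le : rel 'I_n) (I : {set 'I_n}) : Prop :=
  forall x y : 'I_n, le y x -> x \in I -> y \in I.

From mathcomp Require Import all_boot all_algebra.
Set Implicit Arguments. Unset Strict Implicit. Unset Printing Implicit Defensive.

(* In P_{A^v} the new element n lies above exactly the elements of supp v, and
   never below an old one.  Reflexivity, antisymmetry and the natural labelling
   therefore extend for free, while transitivity through n says precisely that
   supp v is downward closed.  Since v is the last row of A^v and is determined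
   by its support, both maps are injective; the indicator row of an order ideal
   gives surjectivity. *)

Section VextEntries.
Variables (n : nat) (A : 'M[bool]_n) (v : 'rV[bool]_n).

Let cast_lift (i : 'I_n) : cast_ord (esym (addn1 n)) (lift ord_max i) = lshift 1 i.
Proof. exact/val_inj/lift_max. Qed.

Let cast_max : cast_ord (esym (addn1 n)) ord_max = rshift n (ord0 : 'I_1).
Proof. by apply: val_inj; rewrite /= addn0. Qed.

Lemma vext_lift i j : vext A v (lift ord_max i) (lift ord_max j) = A i j.
Proof. by rewrite /vext castmxE !cast_lift block_mxEul. Qed.

Lemma vext_lift_max i : vext A v (lift ord_max i) ord_max = false.
Proof. by rewrite /vext castmxE cast_lift cast_max block_mxEur mxE. Qed.

Lemma vext_max_lift j : vext A v ord_max (lift ord_max j) = v ord0 j.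
Proof. by rewrite /vext castmxE cast_lift cast_max block_mxEdl. Qed.

Lemma vext_max : vext A v ord_max ord_max = true.
Proof. by rewrite /vext castmxE cast_max block_mxEdr mxE. Qed.

End VextEntries.

Lemma PM_NL_posetP n (M : 'M[bool]_n) : PM M <-> NL_poset (P_of M).
Proof.
split; last by move=> HM; exists (P_of M); split => //; apply/matrixP => i j; rewrite mxE.
case=> le [[le_refl le_anti le_trans le_nat] ->].
have P_ofE x y : P_of (poset_matrix le) x y = le x y by rewrite /P_of mxE.
split=> [x | x y | y x z | x y]; rewrite ?P_ofE //.
- exact: le_anti.
- exact: le_trans.
- exact: le_nat.
Qed.

Section Extension.
Variables (n : nat) (A : 'M[bool]_n) (v : 'rV[bool]_n).
Local Notation ext := (P_of (vext A v)).

Lemma ext_refl : reflexive (P_of A) -> reflexive ext.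
Proof.
move=> A_refl x; rewrite /P_of; case: (unliftP ord_max x) => [x'|] ->.
  by rewrite vext_lift; apply: A_refl.
exact: vext_max.
Qed.

Lemma ext_anti : antisymmetric (P_of A) -> antisymmetric ext.
Proof.
move=> A_anti x y; rewrite /P_of.
case: (unliftP ord_max x) => [x'|] ->; case: (unliftP ord_max y) => [y'|] ->;
  rewrite ?vext_lift ?vext_lift_max ?vext_max_lift ?andbF //.
by move=> /A_anti ->.
Qed.

Lemma ext_trans :
  transitive (P_of A) -> order_ideal (P_of A) (supp v) -> transitive ext.
Proof.
move=> A_trans A_ideal y x z; rewrite /P_of.
case: (unliftP ord_max x) => [x'|] ->; case: (unliftP ord_max y) => [y'|] ->;
  case: (unliftP ord_max z) => [z'|] ->;
  rewrite ?vext_lift ?vext_lift_max ?vext_max_lift ?vext_max //.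
- exact: A_trans.
- by move=> Ayx; move: (A_ideal y' x' Ayx); rewrite !inE.
Qed.

Lemma ext_natural :
  (forall x y, P_of A x y -> x <= y) -> forall x y, ext x y -> x <= y.
Proof.
move=> A_nat x y; rewrite /P_of.
case: (unliftP ord_max x) => [x'|] ->; case: (unliftP ord_max y) => [y'|] ->;
  rewrite ?vext_lift ?vext_lift_max ?vext_max_lift //.
- by move=> /A_nat; rewrite !lift_max.
- by move=> _; apply: leq_ord.
Qed.

End Extension.

Lemma poset_vectorP n (A : 'M[bool]_n) (v : 'rV[bool]_n) :
  PM A -> poset_vector A v <-> order_ideal (P_of A) (supp v).
Proof.
move=> /PM_NL_posetP [A_refl A_anti A_trans A_nat]; split.
  move=> /PM_NL_posetP [_ _ ext_trans _] x y Ayx; rewrite !inE -!(vext_max_lift A v).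
  by apply: (ext_trans (lift ord_max x)); rewrite /P_of vext_lift.
move=> A_ideal; apply/PM_NL_posetP; split.
- exact: ext_refl.
- exact: ext_anti.
- exact: ext_trans.
- exact: ext_natural.
Qed.

Lemma supp_inj n : injective (@supp n).
Proof.
move=> v w /setP vw; apply/rowP => j.
by have := vw j; rewrite !inE.
Qed.

Lemma supp_row_in n (I : {set 'I_n}) : supp (\row_j (j \in I))%R = I.
Proof. by apply/setP => j; rewrite inE mxE. Qed.

Lemma vext_inj n (A : 'M[bool]_n) : injective (vext A).
Proof.
move=> v w vw; apply/rowP => j.
by rewrite -(vext_max_lift A v) -(vext_max_lift A w) vw.
Qed.

Theorem theorem2p1 (n : nat) (A : 'M[bool]_n) :
  PM A ->
  (forall v : 'rV[bool]_n, poset_vector A v <-> order_ideal (P_of A) (supp v)) /\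
  (* v |-> supp v is a bijection from poset vectors onto order ideals *)
  (forall v w : 'rV[bool]_n, poset_vector A v -> poset_vector A w ->
      supp v = supp w -> v = w) /\
  (forall I : {set 'I_n}, order_ideal (P_of A) I ->
      exists2 v : 'rV[bool]_n, poset_vector A v & supp v = I) /\
  (* poset vectors correspond bijectively to v-extensions *)
  (forall v w : 'rV[bool]_n, poset_vector A v -> poset_vector A w ->
      vext A v = vext A w -> v = w).
Proof.
move=> HA; split; first by move=> v; apply: poset_vectorP.
split; first by move=> v w _ _; apply: supp_inj.
split; last by move=> v w _ _; apply: vext_inj.
move=> I I_ideal; exists (\row_j (j \in I))%R; last exact: supp_row_in.
by apply/poset_vectorP; rewrite ?supp_row_in.
Qed.
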